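(* Let $p\neq 3$ be a prime and let $C(x_1,\ldots,x_r)=a_1x_1^3+a_2x_2^3+\cdots+a_rx_r^3$ with $a_1,\ldots,a_r$ integers. Suppose there are indices $1\leq i<j<k\leq r$ with $a_ia_ja_k\neq 0$ and $\nu_p(a_i)\equiv\nu_p(a_j)\equiv\nu_p(a_k)\pmod 3$. Then $R(C)$ is dense in $\mathbb{Q}_p$.
   Context: For an integral form $F$ in $r$ variables, $R(F)=\{F(\overline{x})/F(\overline{y}):\overline{x},\overline{y}\in\mathbb{Z}^r,\ F(\overline{y})\neq 0\}$, viewed as a subset of the field $\mathbb{Q}_p$ of $p$-adic numbers with its $p$-adic topology. $\nu_p$ denotes the $p$-adic valuation. *)

From mathcomp Require Import all_boot all_order all_algebra.
Set Implicit Arguments. Unset Strict Implicit. Unset Printing Implicit Defensive.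
Import Order.TTheory GRing.Theory Num.Theory.
Local Open Scope ring_scope.

(* p-adic valuation of an integer (meaningful for a <> 0). *)
Definition nu_int (p : nat) (a : int) : nat := logn p `|a|%N.

Definition nu_rat (p : nat) (q : rat) : int :=
  (logn p `|numq q|%N)%:Z - (logn p `|denq q|%N)%:Z.

Definition diag_cubic (r : nat) (a : 'I_r -> int) (x : 'I_r -> int) : int :=
  \sum_(i < r) a i * x i ^+ 3.

Definition ratio_set (r : nat) (F : ('I_r -> int) -> int) (z : rat) : Prop :=
  exists x y : 'I_r -> int, F y != 0 /\ z = (F x)%:~R / (F y)%:~R.

(* Since Q is dense
   in Q_p, this holds iff every rational q is a p-adic limit of points of S:
   for every q and every n there is s in S with |s - q|_p <= p^(-n). *)
Definition padic_dense (p : nat) (S : rat -> Prop) : Prop :=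
  forall (q : rat) (n : nat), exists s : rat,
    S s /\ (s = q \/ (n%:Z <= nu_rat p (s - q))%R).

From mathcomp Require Import all_boot all_order all_algebra fingroup cyclic.
From mathcomp Require Import zify ring.
Set Implicit Arguments. Unset Strict Implicit. Unset Printing Implicit Defensive.
Import Order.TTheory GRing.Theory Num.Theory.
Local Open Scope ring_scope.

(* Write a_m = b_m p^(v_m) with p not dividing b_m.  As the three valuations
   agree modulo 3, substituting suitable powers of p times x, y, z for x_i, x_j,
   x_k (and 0 elsewhere) shows that C represents p^V (b_i x^3 + b_j y^3 + b_k z^3).
   Over a finite field a diagonal ternary cubic with nonzero coefficients has a
   nontrivial zero: the nonzero cubes have index at most 3, and when the three
   coefficients lie in different cube classes a counting argument applies.  As
   p <> 3, Hensel's lemma lifts a zero modulo p, so the ternary form hits every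
   multiple T of p modulo any power of p.  For q = A/D, taking T = A b_i p^3 D^2
   and dividing by the value b_i (pD)^3 at (pD, 0, 0) gives ratios p-adically
   arbitrarily close to q. *)

Section FinFieldCubes.
Variable F : finFieldType.

Definition is_cube (t : F) : bool := [exists s, t == s ^+ 3].

Lemma is_cubeP t : reflect (exists s, t = s ^+ 3) (is_cube t).
Proof. by apply: (iffP existsP) => [[s /eqP->]|[s ->]]; exists s. Qed.

Lemma is_cubeX s : is_cube (s ^+ 3). Proof. by apply/is_cubeP; exists s. Qed.

Lemma is_cubeM u v : is_cube u -> is_cube v -> is_cube (u * v).
Proof. by move=> /is_cubeP[s ->] /is_cubeP[w ->]; rewrite -exprMn is_cubeX. Qed.

Lemma is_cubeV u : is_cube u -> is_cube u^-1.
Proof. by move=> /is_cubeP[s ->]; rewrite -exprVn is_cubeX. Qed.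

Lemma is_cube_div u v : is_cube u -> is_cube v -> is_cube (u / v).
Proof. by move=> cu cv; rewrite is_cubeM ?is_cubeV. Qed.

Lemma is_cubeN1 : is_cube (-1).
Proof. by apply/is_cubeP; exists (-1); rewrite -signr_odd. Qed.

Lemma is_cube0 : is_cube 0.
Proof. by apply/is_cubeP; exists 0; rewrite expr0n. Qed.

Lemma noncube_neq0 t : ~~ is_cube t -> t != 0.
Proof. by apply: contraNneq => ->; apply: is_cube0. Qed.

Lemma finField_mul_generator : exists g : F, forall t, t != 0 -> exists m, t = g ^+ m.
Proof.
have /cyclicP[g genF] := field_unit_group_cyclic [set: {unit F}]%G.
exists (FinRing.uval g) => t t0.
have tU : t \is a GRing.unit by rewrite unitfE.
pose u := FinRing.Unit tU.
have /cycleP[m um] : u \in <[g]>%g by rewrite -genF inE.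
by exists m; rewrite -FinRing.val_unitX -um.
Qed.

(* That is, the nonzero cubes have index at most 3 in the unit group. *)
Lemma noncubes_mul x y :
  ~~ is_cube x -> ~~ is_cube y -> ~~ is_cube (x / y) -> is_cube (x * y).
Proof.
move=> nx ny nxy; have [g gen] := finField_mul_generator.
have [i ex] := gen x (noncube_neq0 nx); have [j ey] := gen y (noncube_neq0 ny).
have cube_gX m : (3 %| m)%N -> is_cube (g ^+ m).
  by move=> /dvdnP[k ->]; rewrite exprM is_cubeX.
have nxy2 : ~~ is_cube (g ^+ (i + 2 * j)).
  apply: contra nxy => cxy2; have -> : x / y = g ^+ (i + 2 * j) / y ^+ 3.
    by rewrite exprD mulnC exprM ex -ey; field; rewrite noncube_neq0.
  by rewrite is_cube_div ?is_cubeX.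
suff /cube_gX : (3 %| i + j)%N by rewrite exprD -ex -ey.
move: nx ny nxy2; rewrite ex ey.
move=> /(contra (cube_gX _)) + /(contra (cube_gX _)) + /(contra (cube_gX _)).
by rewrite /dvdn; lia.
Qed.

Definition cube_class (a : F) : {set F} := [set u | (u != 0) && is_cube (u / a)].

Lemma cube_classP a u : reflect (u != 0 /\ is_cube (u / a)) (u \in cube_class a).
Proof. by rewrite inE; apply: andP. Qed.

Lemma leq_card_cube_class a : a != 0 -> (#|cube_class 1%R| <= #|cube_class a|)%N.
Proof.
move=> a0; rewrite -(card_imset _ (mulfI a0)); apply/subset_leq_card/subsetP.
move=> _ /imsetP[t /cube_classP[t0 ct] ->]; apply/cube_classP.
by rewrite divr1 in ct; split; [exact: mulf_neq0 | rewrite [a * t]mulrC mulfK].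
Qed.

(* When no [u] in the class of [a] has [1 + u] in the class of [c], this maps
   the class of [a] injectively to the nonzero cubes other than [-1]. *)
Definition cube_shift (u : F) : F :=
  if is_cube (1 + u) then - (1 + u) else - (1 + u^-1).

Lemma cube_shift_inj a : ~~ is_cube a -> {in cube_class a &, injective cube_shift}.
Proof.
move=> na; have mixed x y : x \in cube_class a -> y \in cube_class a -> 1 + x != 1 + y^-1.
  move=> /cube_classP[x0 cx] /cube_classP[y0 cy]; apply/negP => /eqP/addrI exy.
  have a0 := noncube_neq0 na; move/negP: na; apply.
  have -> : a = a ^+ 3 / ((x / a) * (y / a))^-1.
    by rewrite exy; field; rewrite a0 y0 oner_eq0.
  exact: is_cube_div (is_cubeX a) (is_cubeV (is_cubeM cx cy)).
move=> u v uA vA; rewrite /cube_shift.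
case: ifP => _; case: ifP => _ /oppr_inj; first exact: addrI.
- by move/eqP; rewrite (negbTE (mixed _ _ uA vA)).
- by move/esym/eqP; rewrite (negbTE (mixed _ _ vA uA)).
- by move/addrI/invr_inj.
Qed.

Lemma one_add_cube_eq a c : ~~ is_cube a -> ~~ is_cube c -> ~~ is_cube (c / a) ->
  exists s w, 1 + a * s ^+ 3 = c * w ^+ 3.
Proof.
move=> na nc nca; have a0 := noncube_neq0 na.
have cube_classN1 : -1 \in cube_class 1 by rewrite inE oppr_eq0 oner_eq0 divr1 is_cubeN1.
have [u uA shift_u] : exists2 u, u \in cube_class a & cube_shift u \notin cube_class 1 :\ -1.
  apply/exists_inP; rewrite -negb_forall_in; apply/negP => /forall_inP sub.
  have /subset_leq_card : cube_shift @: cube_class a \subset cube_class 1 :\ -1.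
    by apply/subsetP => _ /imsetP[u uA ->]; apply: sub.
  rewrite card_in_imset; last exact: cube_shift_inj.
  have := leq_card_cube_class a0; have := cardsD1 (-1) (cube_class 1).
  by rewrite cube_classN1 add1n => -> /leq_trans le /le; rewrite ltnn.
move: (uA) => /cube_classP[u0 cua].
have nu : ~~ is_cube u.
  apply: contra na => cu; have -> : a = u / (u / a) by rewrite invf_div mulrC divfK.
  exact: is_cube_div cu cua.
have u1 : 1 + u != 0.
  by apply: contra nu; rewrite addrC addr_eq0 => /eqP->; rewrite is_cubeN1.
have n1u : ~~ is_cube (1 + u).
  apply: contra shift_u => c1u; rewrite /cube_shift c1u !inE eqr_opp oppr_eq0 u1.
  rewrite -subr_eq0 addrAC subrr add0r u0 divr1 -mulN1r.
  exact: is_cubeM is_cubeN1 c1u.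
have n1ua : ~~ is_cube ((1 + u) / a).
  apply: contra shift_u => c1ua; rewrite /cube_shift (negbTE n1u) !inE eqr_opp.
  rewrite oppr_eq0 -subr_eq0 addrAC subrr add0r invr_eq0 u0 /= divr1 -mulN1r.
  have -> : 1 + u^-1 = ((1 + u) / a) / (u / a) by field; rewrite a0 u0.
  apply/andP; split; last exact: is_cubeM is_cubeN1 (is_cube_div c1ua cua).
  by rewrite !(mulf_eq0, invr_eq0) (negbTE u1) (negbTE a0) (negbTE u0).
have c1uc : is_cube ((1 + u) / c).
  apply: contraNT n1ua => n1uc.
  have -> : (1 + u) / a = ((1 + u) * c) / (c * a).
    by field; rewrite a0 noncube_neq0.
  exact: is_cube_div (noncubes_mul n1u nc n1uc) (noncubes_mul nc na nca).
have [/is_cubeP[s es] /is_cubeP[w ew]] := (cua, c1uc).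
by exists s, w; rewrite -es -ew [a * _]mulrC [c * _]mulrC !divfK ?noncube_neq0.
Qed.

Lemma diag_cubic3_nontrivial_zero (al be ga : F) : al != 0 -> be != 0 -> ga != 0 ->
  exists x y z, [|| x != 0, y != 0 | z != 0] /\
    al * x ^+ 3 + be * y ^+ 3 + ga * z ^+ 3 = 0.
Proof.
move=> al0 be0 ga0.
have [/is_cubeP[t et] | na] := boolP (is_cube (be / al)).
  exists (- t), 1, 0; rewrite oner_neq0 orbT; split=> //.
  by rewrite exprNn -et; field.
have [/is_cubeP[t et] | nc] := boolP (is_cube (- ga / al)).
  exists t, 0, 1; rewrite oner_neq0 !orbT; split=> //.
  by rewrite -et; field.
have [/is_cubeP[t et] | nca] := boolP (is_cube ((- ga / al) / (be / al))).
  exists 0, t, 1; rewrite oner_neq0 !orbT; split=> //.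
  by rewrite -et; field; rewrite al0 be0.
have [s [w e]] := one_add_cube_eq na nc nca.
exists 1, s, w; rewrite oner_neq0; split=> //.
have : al * (1 + be / al * s ^+ 3 - (- ga / al) * w ^+ 3) = 0 by rewrite e subrr mulr0.
by move=> <-; field.
Qed.
End FinFieldCubes.

Section PrimeModulus.
Variable p : nat.
Hypothesis p_pr : prime p.

Lemma prime_ndvdzM (m n : int) : ~~ (p %| m)%Z -> ~~ (p %| n)%Z -> ~~ (p %| m * n)%Z.
Proof. by rewrite !dvdzE abszM Euclid_dvdM // negb_or => -> ->. Qed.

Lemma Fp_intr_eq0 (z : int) : ((z%:~R : 'F_p) == 0) = (p %| z)%Z.
Proof.
rewrite dvdzE (dvdn_pcharf (pchar_Fp p_pr)); case: z => m //=.
by rewrite NegzE rmorphN oppr_eq0.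
Qed.

Lemma Fp_intr_val (x : 'F_p) : ((x : nat)%:Z%:~R : 'F_p) = x.
Proof. by rewrite -pmulrn natr_Zp. Qed.

Lemma diag_cubic3_zero_modp (b1 b2 b3 : int) :
  ~~ (p %| b1)%Z -> ~~ (p %| b2)%Z -> ~~ (p %| b3)%Z ->
  exists x y z : int, [|| ~~ (p %| x)%Z, ~~ (p %| y)%Z | ~~ (p %| z)%Z] /\
    (p %| b1 * x ^+ 3 + b2 * y ^+ 3 + b3 * z ^+ 3)%Z.
Proof.
rewrite -!Fp_intr_eq0 => pb1 pb2 pb3.
have [x [y [z [nz0 zero]]]] := diag_cubic3_nontrivial_zero pb1 pb2 pb3.
exists (x : nat)%:Z, (y : nat)%:Z, (z : nat)%:Z.
rewrite -!Fp_intr_eq0 !intrD ![(_ * _ ^+ 3)%:~R]intrM !(rmorphXn intr) /=.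
by rewrite !Fp_intr_val zero eqxx.
Qed.

Hypothesis p_neq3 : p != 3%N.

Lemma cube_hensel_lift (b R x0 : int) :
  ~~ (p %| b)%Z -> ~~ (p %| x0)%Z -> (p %| b * x0 ^+ 3 + R)%Z ->
  forall N, exists2 x, ~~ (p %| x)%Z & (p%:Z ^+ N.+1 %| b * x ^+ 3 + R)%Z.
Proof.
move=> pb px0 h0; elim=> [|N [x px /dvdzP[m hm]]]; first by exists x0; rewrite ?expr1.
pose Q := p%:Z ^+ N * p; have {}hm : b * x ^+ 3 + R = m * Q by rewrite hm exprSr.
(* Newton step: [u] inverts the derivative [3 b x^2] modulo [p], using [p != 3]. *)
have /coprimezP[[u v] /= huv] : coprimez (3 * b * x ^+ 2) p.
  rewrite coprimez_sym coprimezE prime_coprime // -dvdzE.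
  by rewrite !prime_ndvdzM // dvdzE /= dvdn_prime2.
exists (x - m * u * Q).
  apply: contra px => pxQ; rewrite -(subrK (m * u * Q) x) rpredD //.
  by rewrite dvdz_mull // dvdz_mull.
have vp : v * p = 1 - u * (3 * b * x ^+ 2).
  by apply/eqP; rewrite eq_sym subr_eq addrC huv.
have eR : R = m * Q - b * x ^+ 3 by rewrite -hm addrC addKr.
have -> : b * (x - m * u * Q) ^+ 3 + R =
    Q * p * (m * v + p%:Z ^+ N * (3 * b * x * m ^+ 2 * u ^+ 2 - b * m ^+ 3 * u ^+ 3 * Q))
    + Q * m * (1 - u * (3 * b * x ^+ 2) - v * p).
  by rewrite eR /Q; ring.
by rewrite -vp subrr mulr0 addr0 !exprSr dvdz_mulr.
Qed.

Lemma diag_cubic3_approx (b1 b2 b3 T : int) :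
  ~~ (p %| b1)%Z -> ~~ (p %| b2)%Z -> ~~ (p %| b3)%Z -> (p %| T)%Z ->
  forall N, exists x y z : int,
    (p%:Z ^+ N %| b1 * x ^+ 3 + b2 * y ^+ 3 + b3 * z ^+ 3 - T)%Z.
Proof.
move=> pb1 pb2 pb3 pT N.
have [x0 [y0 [z0 [/or3P unit zero]]]] := diag_cubic3_zero_modp pb1 pb2 pb3.
have {}zero : (p %| b1 * x0 ^+ 3 + b2 * y0 ^+ 3 + b3 * z0 ^+ 3 - T)%Z by rewrite rpredB.
have lift b u (S : int -> int) : ~~ (p %| b)%Z -> ~~ (p %| u)%Z -> (p %| S u)%Z ->
    (forall w, S w = b * w ^+ 3 + (S u - b * u ^+ 3)) -> exists w, (p%:Z ^+ N %| S w)%Z.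
  move=> pb pu pS eS; have Su : (p %| b * u ^+ 3 + (S u - b * u ^+ 3))%Z.
    by rewrite addrC subrK.
  have [w _ Sw] := cube_hensel_lift pb pu Su N.
  by exists w; rewrite eS (dvdz_trans _ Sw) // dvdz_exp2l.
case: unit => [px|py|pz].
- have [x hx] := lift b1 x0 (fun x => b1 * x ^+ 3 + b2 * y0 ^+ 3 + b3 * z0 ^+ 3 - T)
    pb1 px zero ltac:(move=> w /=; ring).
  by exists x, y0, z0.
- have [y hy] := lift b2 y0 (fun y => b1 * x0 ^+ 3 + b2 * y ^+ 3 + b3 * z0 ^+ 3 - T)
    pb2 py zero ltac:(move=> w /=; ring).
  by exists x0, y, z0.
- have [z hz] := lift b3 z0 (fun z => b1 * x0 ^+ 3 + b2 * y0 ^+ 3 + b3 * z ^+ 3 - T)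
    pb3 pz zero ltac:(move=> w /=; ring).
  by exists x0, y0, z.
Qed.

Lemma nu_rat_frac (U W : int) : U != 0 -> W != 0 ->
  nu_rat p (U%:~R / W%:~R) = (logn p `|U|)%:Z - (logn p `|W|)%:Z.
Proof.
move=> U0 W0; rewrite /nu_rat; set q : rat := _ / _.
have q0 : q != 0 by rewrite mulf_neq0 ?invr_eq0 ?intr_eq0.
have e : numq q * W = U * denq q.
  by apply: (@intr_inj rat); rewrite !intrM numqE /q; field; rewrite intr_eq0.
have := congr1 (fun z : int => logn p `|z|%N) e => /=.
by rewrite !abszM !lognM ?absz_gt0 ?numq_eq0 ?denq_neq0 //; lia.
Qed.

Lemma nu_rat_frac_ge (n : nat) (U W : int) : U != 0 -> W != 0 ->
  (p%:Z ^+ (n + logn p `|W|) %| U)%Z -> n%:Z <= nu_rat p (U%:~R / W%:~R).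
Proof.
move=> U0 W0; rewrite nu_rat_frac // dvdzE abszX pfactor_dvdn ?absz_gt0 //=.
lia.
Qed.

Lemma nu_int_decomp (a : int) : a != 0 -> exists2 b, ~~ (p %| b)%Z & a = b * p%:Z ^+ nu_int p a.
Proof.
move=> a0; rewrite /nu_int.
have pa : (p%:Z ^+ logn p `|a| %| a)%Z by rewrite dvdzE abszX /= pfactor_dvdnn.
exists (a %/ p%:Z ^+ logn p `|a|)%Z; last by rewrite divzK.
apply/negP => pb; have : (p%:Z ^+ (logn p `|a|).+1 %| a)%Z.
  by rewrite -[X in (_ %| X)%Z](divzK pa) exprSr mulrC dvdz_mul.
by rewrite dvdzE abszX /= pfactor_dvdn ?absz_gt0 // ltnn.
Qed.

Lemma padic_dense_ratio_diag3 (r : nat) (F : ('I_r -> int) -> int) (c b1 b2 b3 : int) :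
  ~~ (p %| b1)%Z -> ~~ (p %| b2)%Z -> ~~ (p %| b3)%Z -> c != 0 ->
  (forall x y z : int, exists v, F v = c * (b1 * x ^+ 3 + b2 * y ^+ 3 + b3 * z ^+ 3)) ->
  padic_dense p (ratio_set F).
Proof.
move=> pb1 pb2 pb3 c0 reprF q n.
have p0 : p != 0%N by rewrite -lt0n prime_gt0.
have b10 : b1 != 0 by apply: contraNneq pb1 => ->; apply: dvdz0.
move: (numq q) (denq q) (denq_neq0 q) (divq_num_den q) => A D D0 <-.
(* [W] is the value of [F] at [(pD, 0, 0)], and [c T / W = A / D]. *)
pose W := c * (b1 * (p%:Z * D) ^+ 3); pose T := A * b1 * p%:Z ^+ 3 * D ^+ 2.
have W0 : W != 0 by rewrite !mulf_neq0 ?expf_neq0 ?eqz_nat.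
have pT : (p %| T)%Z by rewrite dvdz_mulr // dvdz_mull // dvdz_exp.
have [x [y [z BT]]] := diag_cubic3_approx pb1 pb2 pb3 pT (n + logn p `|W|).
have [v Fv] := reprF x y z; have [w Fw] := reprF (p%:Z * D) 0 0.
set B := b1 * x ^+ 3 + b2 * y ^+ 3 + b3 * z ^+ 3 in BT Fv.
have {}Fw : F w = W by rewrite Fw expr0n /= !mulr0 !addr0.
exists ((F v)%:~R / (F w)%:~R); split; first by exists v, w; rewrite Fw.
have e : (F v)%:~R / (F w)%:~R - A%:~R / D%:~R = (c * (B - T))%:~R / W%:~R :> rat.
  by rewrite Fv Fw /W /T !(intrM, intrB); field; rewrite !intr_eq0 pnatr_eq0 p0 b10 c0 D0.
have [BT0|BT0] := eqVneq (B - T) 0; [left | right].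
  by apply/eqP; rewrite -subr_eq0 e BT0 mulr0 mul0r.
by rewrite e nu_rat_frac_ge ?mulf_neq0 ?dvdz_mull.
Qed.

End PrimeModulus.

Lemma common_cube_shift (vi vj vk : nat) : vi = vj %[mod 3] -> vj = vk %[mod 3] ->
  exists V ei ej ek, [/\ vi + 3 * ei = V, vj + 3 * ej = V & vk + 3 * ek = V]%N.
Proof.
move=> hij hjk; pose M := (vi + vj + vk)%N.
exists (3 * M + vi %% 3)%N, (M - vi %/ 3)%N, (M - vj %/ 3)%N, (M - vk %/ 3)%N.
by have := divn_eq vi 3; have := divn_eq vj 3; have := divn_eq vk 3; split; lia.
Qed.

Lemma diag_cubic_restrict3 (r : nat) (a : 'I_r -> int) (i j k : 'I_r) (xi xj xk : int) :
  i != j -> i != k -> j != k ->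
  exists x, diag_cubic a x = a i * xi ^+ 3 + a j * xj ^+ 3 + a k * xk ^+ 3.
Proof.
move=> ij ik jk.
pose x m := if m == i then xi else if m == j then xj else if m == k then xk else 0.
exists x; rewrite /diag_cubic (bigD1 i) // (bigD1 j) ?(eq_sym j) //.
rewrite (bigD1 k) /= ?(eq_sym k) ?ik ?jk // big1 ?addr0 ?addrA; last first.
  by move=> m /andP[/andP[/negbTE mi /negbTE mj] /negbTE mk]; rewrite /x mi mj mk expr0n mulr0.
by rewrite /x !eqxx ![j == i]eq_sym ![k == _]eq_sym (negbTE ij) (negbTE ik) (negbTE jk).
Qed.

Lemma scale_cube_term (R : comPzRingType) (b c x : R) (v e V : nat) :
  (v + 3 * e)%N = V -> b * c ^+ v * (c ^+ e * x) ^+ 3 = b * c ^+ V * x ^+ 3.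
Proof. by move=> <-; rewrite exprD mulnC exprM exprMn; ring. Qed.

Theorem corollary1p6 (p : nat) (r : nat) (a : 'I_r -> int)
  (i j k : 'I_r) :
  prime p -> p != 3%N ->
  (i < j < k)%N ->
  a i * a j * a k != 0 ->
  nu_int p (a i) = nu_int p (a j) %[mod 3] ->
  nu_int p (a j) = nu_int p (a k) %[mod 3] ->
  padic_dense p (ratio_set (diag_cubic a)).
Proof.
move=> p_pr p_neq3 /andP[lt_ij lt_jk] a0 hij hjk.
have [[ai0 aj0] ak0] : (a i != 0 /\ a j != 0) /\ a k != 0.
  by move: a0; rewrite !mulf_eq0 !negb_or => /andP[/andP[-> ->] ->].
have ij : i != j by rewrite -val_eqE neq_ltn lt_ij.
have ik : i != k by rewrite -val_eqE neq_ltn (ltn_trans lt_ij lt_jk).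
have jk : j != k by rewrite -val_eqE neq_ltn lt_jk.
have [bi pbi Dai] := nu_int_decomp p_pr ai0.
have [bj pbj Daj] := nu_int_decomp p_pr aj0.
have [bk pbk Dak] := nu_int_decomp p_pr ak0.
have [V [ei [ej [ek [Vi Vj Vk]]]]] := common_cube_shift hij hjk.
apply: (padic_dense_ratio_diag3 (c := p%:Z ^+ V) p_pr p_neq3 pbi pbj pbk).
  by rewrite expf_neq0 // eqz_nat -lt0n prime_gt0.
move=> x y z; have [v Cv] := diag_cubic_restrict3 a
  (p%:Z ^+ ei * x) (p%:Z ^+ ej * y) (p%:Z ^+ ek * z) ij ik jk.
by exists v; rewrite Cv Dai Daj Dak (scale_cube_term _ _ _ Vi) (scale_cube_term _ _ _ Vj)
  (scale_cube_term _ _ _ Vk); ring.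
Qed.
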